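(* Let $t\in\{w,m\}$ index two types with masses $\mu_w>0,\mu_m>0$, $r:=\mu_w/\mu_m$. Suppose there are parameters $r^e_t\in(0,1)$, $c_t\ge0$, $C_t>0$ ($t\in\{w,m\}$) such that for all $u\in(0,1)$, $$h_t(u)=\frac{c_t}{u},\qquad F_{\Delta_t}^{-1}(1-u)=C_t\,\frac{r^e_t-u}{u(1-u)},$$ where $F_{\Delta_t}$ is the cumulative distribution function of the sector-1 advantage $\Delta_t=Y_{1t}-Y_{2t}$. Let $\gamma_w:=\frac{\mu_m}{\mu_w}\frac{c_w}{C_w}$ and $\gamma_m:=\frac{\mu_w}{\mu_m}\frac{c_m}{C_m}$. If $0<r^e_w<r^e_m<1$ and $\gamma_w+\gamma_m<1$, then there is a unique equilibrium $(r_w^*,r_m^* )$, and: (1) if $\bar\gamma:=\max\{\gamma_w r^e_m/r^e_w+\gamma_m,\ \gamma_w+\gamma_m(1-r^e_w)/(1-r^e_m)\}<1$, then $$r_w^*=r_w^e-\frac{\gamma_w}{1-\gamma_w-\gamma_m}(r_m^e-r_w^e),\qquad r_m^*=r_m^e+\frac{\gamma_m}{1-\gamma_w-\gamma_m}(r_m^e-r_w^e);$$ (2) if $\gamma_w r^e_m/r^e_w+\gamma_m\ge1$ and $\gamma_m<1-r^e_m$, then $r_w^*=0$ and $r_m^*=r^e_m/(1-\gamma_m)$; (3) if $\gamma_w<r^e_w$ and $\gamma_w+\gamma_m(1-r^e_w)/(1-r^e_m)\ge1$, then $r_w^*=(r^e_w-\gamma_w)/(1-\gamma_w)$ and $r_m^*=1$;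 (4) if $\gamma_w\ge r^e_w$ and $\gamma_m\ge1-r^e_m$, then $r_w^*=0$ and $r_m^*=1$.
   Context: For $x,y\in(0,1)$, $z>0$, define $g_t(x,y,z):=h_t\left(\frac{1}{1+z y/x}\right)-h_t\left(\frac{1}{1+z(1-y)/(1-x)}\right)$. A composition is a pair $(r_w,r_m)\in[0,1]^2$, $r_t$ being the share of type-$t$ individuals choosing sector 1. An equilibrium is a composition $(r_w^*,r_m^* )$ such that: (i) if $r_w^*\in(0,1)$ then $F_{\Delta_w}^{-1}(1-r_w^* )=g_w(r_w^*,r_m^*,1/r)$, and if $r_m^*\in(0,1)$ then $F_{\Delta_m}^{-1}(1-r_m^* )=g_m(r_m^*,r_w^*,r)$; (ii) if $r_w^*=0$, there is $\bar\delta>0$ such that for all $0<\delta<\bar\delta$, $F_{\Delta_w}^{-1}(1-\delta)\le g_w(\delta,r_m^*,1/r)$; (iii) if $r_m^*=1$, there is $\bar\delta>0$ such that for all $0<\delta<\bar\delta$, $F_{\Delta_m}^{-1}(\delta)\ge g_m(1-\delta,r_w^*,r)$; (iv) symmetrically, if $r_w^*=1$, there is $\bar\delta>0$ such that for all $0<\delta<\bar\delta$, $F_{\Delta_w}^{-1}(\delta)\ge g_w(1-\delta,r_m^*,1/r)$, and if $r_m^*=0$, there is $\bar\delta>0$ such that for all $0<\delta<\bar\delta$, $F_{\Delta_m}^{-1}(1-\delta)\le g_m(\delta,r_w^*,r)$. *)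

From Stdlib Require Export Reals.
Open Scope R_scope.

Definition g (h : R -> R) (x y z : R) : R :=
  h (1 / (1 + z * y / x)) - h (1 / (1 + z * (1 - y) / (1 - x))).

(* Equilibrium composition (rw, rm) in [0,1]^2, given the quantile functions
   Finv_w = F_{Delta_w}^{-1}, Finv_m = F_{Delta_m}^{-1}, the functions h_w, h_m,
   and the mass ratio r = mu_w / mu_m. *)
Definition is_equilibrium (Finv_w Finv_m h_w h_m : R -> R) (r rw rm : R) : Prop :=
  0 <= rw <= 1 /\ 0 <= rm <= 1 /\
  (0 < rw < 1 -> Finv_w (1 - rw) = g h_w rw rm (1 / r)) /\
  (0 < rm < 1 -> Finv_m (1 - rm) = g h_m rm rw r) /\
  (rw = 0 -> exists dbar, dbar > 0 /\
     forall d, 0 < d < dbar -> Finv_w (1 - d) <= g h_w d rm (1 / r)) /\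
  (rw = 1 -> exists dbar, dbar > 0 /\
     forall d, 0 < d < dbar -> Finv_w d >= g h_w (1 - d) rm (1 / r)) /\
  (rm = 1 -> exists dbar, dbar > 0 /\
     forall d, 0 < d < dbar -> Finv_m d >= g h_m (1 - d) rw r) /\
  (rm = 0 -> exists dbar, dbar > 0 /\
     forall d, 0 < d < dbar -> Finv_m (1 - d) <= g h_m d rw r).

(* With h(u) = c/u one gets g(x, y, z) = c z (y - x) / (x (1 - x)), so
   F^{-1}(1 - x) - g(x, y, z) is C / (x (1 - x)) times the affine residual
   (r^e - k y) - (1 - k) x with k = z c / C, which is gamma_w for women (z = 1/r)
   and gamma_m for men (z = r).  The interior, lower-corner and upper-corner conditions of an equilibrium thus say
   that each share solves a one-dimensional affine complementarity problem on [0,1]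
   given the other share.  Such solutions are monotone in the data, so two equilibria
   satisfy (1 - gamma_w)|dx| <= gamma_w |dy| and (1 - gamma_m)|dy| <= gamma_m |dx|,
   which forces dx = dy = 0 because gamma_w + gamma_m < 1.  Existence and the four
   formulas follow by checking the explicit candidate in each sign regime of the two
   components of gamma-bar; these regimes cover every admissible parameter. *)

From Stdlib Require Import Reals Lra.
Open Scope R_scope.

Definition near_right0 (P : R -> Prop) : Prop :=
  exists dbar, dbar > 0 /\ forall d, 0 < d < dbar -> P d.

Lemma near_right0_iff (P Q : R -> Prop) :
  (forall d, 0 < d < 1 -> (P d <-> Q d)) -> (near_right0 P <-> near_right0 Q).
Proof.
  intros HPQ.
  split; intros [dbar [Hdbar H]]; exists (Rmin dbar 1);
    (split; [apply Rmin_pos; lra |]); intros d Hd;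
    pose proof (Rmin_l dbar 1); pose proof (Rmin_r dbar 1);
    apply HPQ; [lra | apply H; lra | lra | apply H; lra].
Qed.

Lemma near_right0_affine_le0 p s :
  0 <= s -> (near_right0 (fun d => p - s * d <= 0) <-> p <= 0).
Proof.
  intros Hs; split.
  - intros [dbar [Hdbar H]].
    destruct (Rle_or_lt p 0) as [Hp | Hp]; [exact Hp | exfalso].
    set (d := Rmin (dbar / 2) (p / (s + 1))).
    assert (Hd0 : 0 < d) by (apply Rmin_pos; [lra | apply Rdiv_lt_0_compat; lra]).
    assert (Hd1 : d <= dbar / 2) by apply Rmin_l.
    assert (Hsd : (s + 1) * d <= p).
    { replace p with ((s + 1) * (p / (s + 1))) by (field; lra).
      apply Rmult_le_compat_l; [lra | apply Rmin_r]. }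
    specialize (H d ltac:(lra)); lra.
  - intros Hp; exists 1; split; [lra |]; intros d Hd; nra.
Qed.

Lemma reciprocal_share_in_unit t : 0 <= t -> 0 < 1 / (1 + t) <= 1.
Proof.
  intros Ht; split; [apply Rdiv_lt_0_compat; lra |].
  apply (Rmult_le_reg_r (1 + t)); [lra |]. field_simplify; lra.
Qed.

Section OneType.
Variables (c C re z : R) (h F : R -> R).
Hypotheses (HC : 0 < C) (Hz : 0 <= z).
Hypothesis Hh : forall u, 0 < u <= 1 -> h u = c / u.
Hypothesis HF : forall u, 0 < u < 1 -> F (1 - u) = C * (re - u) / (u * (1 - u)).
Let k := z * c / C.
Hypothesis Hk : k <= 1.

Lemma quantile_sub_g x y : 0 < x < 1 -> 0 <= y <= 1 ->
  F (1 - x) - g h x y z = C / (x * (1 - x)) * ((re - k * y) - (1 - k) * x).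
Proof.
  intros Hx Hy. unfold g, k.
  assert (Hw : 0 <= z * y / x) by (apply Rmult_le_pos; [nra | left; apply Rinv_0_lt_compat; lra]).
  assert (Hm : 0 <= z * (1 - y) / (1 - x))
    by (apply Rmult_le_pos; [nra | left; apply Rinv_0_lt_compat; lra]).
  rewrite HF, (Hh _ (reciprocal_share_in_unit _ Hw)), (Hh _ (reciprocal_share_in_unit _ Hm)) by lra.
  field; repeat split; nra.
Qed.

Lemma quantile_weight_pos x : 0 < x < 1 -> 0 < C / (x * (1 - x)).
Proof. intros Hx; apply Rdiv_lt_0_compat; nra. Qed.

Lemma interior_condition_iff x y : 0 < x < 1 -> 0 <= y <= 1 ->
  (F (1 - x) = g h x y z <-> re - k * y = (1 - k) * x).
Proof.
  intros Hx Hy.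
  pose proof (quantile_sub_g x y Hx Hy); pose proof (quantile_weight_pos x Hx).
  split; intros E; nra.
Qed.

Lemma lower_corner_condition_iff y : 0 <= y <= 1 ->
  (near_right0 (fun d => F (1 - d) <= g h d y z) <-> re - k * y <= 0).
Proof.
  intros Hy.
  rewrite <- (near_right0_affine_le0 (re - k * y) (1 - k)) by lra.
  apply near_right0_iff; intros d Hd.
  pose proof (quantile_sub_g d y Hd Hy); pose proof (quantile_weight_pos d Hd).
  split; intros E; nra.
Qed.

Lemma upper_corner_condition_iff y : 0 <= y <= 1 ->
  (near_right0 (fun d => F d >= g h (1 - d) y z) <-> 1 - k <= re - k * y).
Proof.
  intros Hy.
  transitivity (near_right0 (fun d => ((1 - k) - (re - k * y)) - (1 - k) * d <= 0)).
  - apply near_right0_iff; intros d Hd.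
    assert (Hd' : 0 < 1 - d < 1) by lra.
    pose proof (quantile_sub_g (1 - d) y Hd' Hy) as E.
    pose proof (quantile_weight_pos (1 - d) Hd').
    replace (1 - (1 - d)) with d in * by ring.
    split; intros; nra.
  - rewrite near_right0_affine_le0 by lra; lra.
Qed.

End OneType.

(* [x] solves the complementarity problem on [0,1] for the decreasing residual
   [t - s x]: it vanishes at an interior [x] and has the sign pointing out of
   [0,1] at a corner. *)
Definition best_response (t s x : R) : Prop :=
  0 <= x <= 1 /\ (0 < x < 1 -> t = s * x) /\ (x = 0 -> t <= 0) /\ (x = 1 -> s <= t).

Lemma best_response_interior t s x : 0 < x < 1 -> t = s * x -> best_response t s x.
Proof. unfold best_response; lra. Qed.

Lemma best_response_0 t s : t <= 0 -> best_response t s 0.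
Proof. unfold best_response; lra. Qed.

Lemma best_response_1 t s : s <= t -> best_response t s 1.
Proof. unfold best_response; lra. Qed.

Lemma best_response_variational t s x z :
  best_response t s x -> 0 <= z <= 1 -> (t - s * x) * (z - x) <= 0.
Proof.
  intros (Hx & Hint & H0 & H1) Hz.
  assert (Hcases : x = 0 \/ 0 < x < 1 \/ x = 1) by lra.
  destruct Hcases as [-> | [Hx' | ->]].
  - specialize (H0 eq_refl); nra.
  - rewrite (Hint Hx'); lra.
  - specialize (H1 eq_refl); nra.
Qed.

Lemma best_response_monotone t t' s x x' :
  best_response t s x -> best_response t' s x' ->
  s * (x - x') ^ 2 <= (t - t') * (x - x').
Proof.
  intros H H'.
  pose proof (best_response_variational _ _ _ x' H (proj1 H')).
  pose proof (best_response_variational _ _ _ x H' (proj1 H)).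
  nra.
Qed.

Lemma scaled_square_nonpos_eq0 s w : 0 < s -> s * w ^ 2 <= 0 -> w = 0.
Proof.
  intros Hs H.
  apply Rsqr_0_uniq, Rle_antisym; [| apply Rle_0_sqr].
  apply (Rmult_le_reg_l s); [exact Hs |].
  unfold Rsqr; rewrite Rmult_0_r; simpl in H; lra.
Qed.

Definition linear_equilibrium (a b ew em x y : R) : Prop :=
  best_response (ew - a * y) (1 - a) x /\ best_response (em - b * x) (1 - b) y.

Lemma linear_equilibrium_unique a b ew em x y x' y' :
  0 <= a -> 0 <= b -> a + b < 1 ->
  linear_equilibrium a b ew em x y -> linear_equilibrium a b ew em x' y' ->
  x' = x /\ y' = y.
Proof.
  intros Ha Hb Hab [Hx Hy] [Hx' Hy'].
  pose proof (best_response_monotone _ _ _ _ _ Hx Hx') as Mx.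
  pose proof (best_response_monotone _ _ _ _ _ Hy Hy') as My.
  assert (Mu : (1 - a) * (x - x') ^ 2 <= - a * ((x - x') * (y - y')))
    by (eapply Rle_trans; [exact Mx | right; ring]).
  assert (Mv : (1 - b) * (y - y') ^ 2 <= - b * ((x - x') * (y - y')))
    by (eapply Rle_trans; [exact My | right; ring]).
  set (u := x - x') in *; set (v := y - y') in *.
  (* Multiplying the two bounds gives (1 - a) (1 - b) (u v)^2 <= a b (u v)^2. *)
  assert (Huv : u * v = 0).
  { assert (Nu : 0 <= (1 - a) * u ^ 2) by nra.
    assert (Nv : 0 <= (1 - b) * v ^ 2) by nra.
    pose proof (Rmult_le_compat _ _ _ _ Nu Nv Mu Mv).
    apply (scaled_square_nonpos_eq0 (1 - a - b)); [lra | nra]. }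
  rewrite Huv, Rmult_0_r in Mu, Mv.
  apply scaled_square_nonpos_eq0 in Mu; [|lra].
  apply scaled_square_nonpos_eq0 in Mv; [|lra].
  unfold u, v in *; lra.
Qed.

Section LinearRegimes.
Variables a b ew em : R.
Hypotheses (Ha : 0 <= a) (Hb : 0 <= b) (Hab : a + b < 1)
  (Hew : 0 < ew) (Hlt : ew < em) (Hem : em < 1).

Lemma gamma_bar_w_lt1_iff : a * em / ew + b < 1 <-> a * em < (1 - b) * ew.
Proof.
  assert (E : a * em / ew * ew = a * em) by (field; lra).
  split; intros; nra.
Qed.

Lemma gamma_bar_m_lt1_iff :
  a + b * (1 - ew) / (1 - em) < 1 <-> b * (1 - ew) < (1 - a) * (1 - em).
Proof.
  assert (E : b * (1 - ew) / (1 - em) * (1 - em) = b * (1 - ew)) by (field; lra).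
  split; intros; nra.
Qed.

Lemma linear_equilibrium_interior :
  a * em < (1 - b) * ew -> b * (1 - ew) < (1 - a) * (1 - em) ->
  linear_equilibrium a b ew em
    (ew - a / (1 - a - b) * (em - ew)) (em + b / (1 - a - b) * (em - ew)).
Proof.
  intros Hp Hq.
  set (x := ew - a / (1 - a - b) * (em - ew)).
  set (y := em + b / (1 - a - b) * (em - ew)).
  assert (Hx : x * (1 - a - b) = (1 - b) * ew - a * em) by (unfold x; field; lra).
  assert (Hy : y * (1 - a - b) = (1 - a) * em - b * ew) by (unfold y; field; lra).
  split; apply best_response_interior; try nra.
Qed.

Lemma linear_equilibrium_w0 :
  (1 - b) * ew <= a * em -> b < 1 - em ->
  linear_equilibrium a b ew em 0 (em / (1 - b)).
Proof.
  intros Hp Hb1.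
  assert (Hy : em / (1 - b) * (1 - b) = em) by (field; lra).
  split; [apply best_response_0 | apply best_response_interior]; nra.
Qed.

Lemma linear_equilibrium_m1 :
  a < ew -> (1 - a) * (1 - em) <= b * (1 - ew) ->
  linear_equilibrium a b ew em ((ew - a) / (1 - a)) 1.
Proof.
  intros Ha1 Hq.
  assert (Hx : (ew - a) / (1 - a) * (1 - a) = ew - a) by (field; lra).
  split; [apply best_response_interior | apply best_response_1]; nra.
Qed.

Lemma linear_equilibrium_w0_m1 :
  ew <= a -> 1 - em <= b -> linear_equilibrium a b ew em 0 1.
Proof. split; [apply best_response_0 | apply best_response_1]; lra. Qed.

Lemma linear_equilibrium_exists : exists x y, linear_equilibrium a b ew em x y.
Proof.
  (* These identities rule out the sign patterns not covered by one of the
     four regimes. *)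
  assert (Ip : (1 - ew) * (a * em - (1 - b) * ew) + ew * ((1 - a) * (1 - em) - b * (1 - ew))
               = (a - ew) * (em - ew)) by ring.
  assert (Iq : (1 - em) * (a * em - (1 - b) * ew) + em * ((1 - a) * (1 - em) - b * (1 - ew))
               = (em - ew) * (1 - em - b)) by ring.
  destruct (Rlt_or_le (a * em) ((1 - b) * ew)) as [Hp | Hp];
  destruct (Rlt_or_le (b * (1 - ew)) ((1 - a) * (1 - em))) as [Hq | Hq];
  destruct (Rlt_or_le b (1 - em)) as [Hb1 | Hb1];
  destruct (Rlt_or_le a ew) as [Ha1 | Ha1];
  solve [ do 2 eexists; apply linear_equilibrium_interior; assumption
        | do 2 eexists; apply linear_equilibrium_w0; assumption
        | do 2 eexists; apply linear_equilibrium_m1; assumption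
        | do 2 eexists; apply linear_equilibrium_w0_m1; assumption
        | exfalso; nra ].
Qed.

End LinearRegimes.

Lemma equilibrium_iff_linear (re_w re_m c_w c_m C_w C_m r : R) (h_w h_m Finv_w Finv_m : R -> R)
  (HC_w : 0 < C_w) (HC_m : 0 < C_m) (Hr : 0 < r)
  (Hh_w : forall u, 0 < u <= 1 -> h_w u = c_w / u)
  (Hh_m : forall u, 0 < u <= 1 -> h_m u = c_m / u)
  (HF_w : forall u, 0 < u < 1 -> Finv_w (1 - u) = C_w * (re_w - u) / (u * (1 - u)))
  (HF_m : forall u, 0 < u < 1 -> Finv_m (1 - u) = C_m * (re_m - u) / (u * (1 - u)))
  (Hk_w : 1 / r * c_w / C_w <= 1) (Hk_m : r * c_m / C_m <= 1) (x y : R) :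
  is_equilibrium Finv_w Finv_m h_w h_m r x y <->
  linear_equilibrium (1 / r * c_w / C_w) (r * c_m / C_m) re_w re_m x y.
Proof.
  assert (Hz : 0 <= 1 / r) by (left; apply Rdiv_lt_0_compat; lra).
  pose proof (interior_condition_iff _ _ _ _ _ _ HC_w Hz Hh_w HF_w) as Iw.
  pose proof (interior_condition_iff _ _ _ _ _ _ HC_m (Rlt_le _ _ Hr) Hh_m HF_m) as Im.
  pose proof (lower_corner_condition_iff _ _ _ _ _ _ HC_w Hz Hh_w HF_w Hk_w) as Lw.
  pose proof (lower_corner_condition_iff _ _ _ _ _ _ HC_m (Rlt_le _ _ Hr) Hh_m HF_m Hk_m) as Lm.
  pose proof (upper_corner_condition_iff _ _ _ _ _ _ HC_w Hz Hh_w HF_w Hk_w) as Uw.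
  pose proof (upper_corner_condition_iff _ _ _ _ _ _ HC_m (Rlt_le _ _ Hr) Hh_m HF_m Hk_m) as Um.
  unfold is_equilibrium, linear_equilibrium, best_response.
  split; intros (Hx & Hy & ?); repeat split; try tauto; intro Hcase;
    first [ apply Iw | apply Im | apply Lw | apply Lm | apply Uw | apply Um ];
    tauto.
Qed.

Theorem proposition3
  (mu_w mu_m re_w re_m c_w c_m C_w C_m : R)
  (h_w h_m Finv_w Finv_m : R -> R)
  (Hmu_w : mu_w > 0) (Hmu_m : mu_m > 0)
  (Hre_w : 0 < re_w < 1) (Hre_m : 0 < re_m < 1)
  (Hc_w : c_w >= 0) (Hc_m : c_m >= 0)
  (HC_w : C_w > 0) (HC_m : C_m > 0)
  (Hh_w : forall u, 0 < u <= 1 -> h_w u = c_w / u)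
  (Hh_m : forall u, 0 < u <= 1 -> h_m u = c_m / u)
  (HF_w : forall u, 0 < u < 1 -> Finv_w (1 - u) = C_w * (re_w - u) / (u * (1 - u)))
  (HF_m : forall u, 0 < u < 1 -> Finv_m (1 - u) = C_m * (re_m - u) / (u * (1 - u))) :
  let r := mu_w / mu_m in
  let gam_w := mu_m / mu_w * (c_w / C_w) in
  let gam_m := mu_w / mu_m * (c_m / C_m) in
  0 < re_w < re_m -> re_m < 1 -> gam_w + gam_m < 1 ->
  exists rw rm,
    is_equilibrium Finv_w Finv_m h_w h_m r rw rm /\
    (forall rw' rm', is_equilibrium Finv_w Finv_m h_w h_m r rw' rm' ->
        rw' = rw /\ rm' = rm) /\
    (Rmax (gam_w * re_m / re_w + gam_m) (gam_w + gam_m * (1 - re_w) / (1 - re_m)) < 1 ->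
        rw = re_w - gam_w / (1 - gam_w - gam_m) * (re_m - re_w) /\
        rm = re_m + gam_m / (1 - gam_w - gam_m) * (re_m - re_w)) /\
    (gam_w * re_m / re_w + gam_m >= 1 -> gam_m < 1 - re_m ->
        rw = 0 /\ rm = re_m / (1 - gam_m)) /\
    (gam_w < re_w -> gam_w + gam_m * (1 - re_w) / (1 - re_m) >= 1 ->
        rw = (re_w - gam_w) / (1 - gam_w) /\ rm = 1) /\
    (gam_w >= re_w -> gam_m >= 1 - re_m ->
        rw = 0 /\ rm = 1).
Proof.
  intros r gam_w gam_m Hw Hm Hg.
  assert (Hr : 0 < r) by (apply Rdiv_lt_0_compat; lra).
  assert (Hgam_w : 0 <= gam_w)
    by (unfold gam_w, Rdiv; repeat apply Rmult_le_pos; try (left; apply Rinv_0_lt_compat); lra).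
  assert (Hgam_m : 0 <= gam_m)
    by (unfold gam_m, Rdiv; repeat apply Rmult_le_pos; try (left; apply Rinv_0_lt_compat); lra).
  assert (Ea : 1 / r * c_w / C_w = gam_w) by (unfold r, gam_w; field; lra).
  assert (Eb : r * c_m / C_m = gam_m) by (unfold r, gam_m; field; lra).
  assert (Equiv : forall x y, is_equilibrium Finv_w Finv_m h_w h_m r x y <->
                              linear_equilibrium gam_w gam_m re_w re_m x y).
  { intros x y; rewrite <- Ea, <- Eb.
    apply equilibrium_iff_linear; try assumption; rewrite ?Ea, ?Eb; lra. }
  destruct (linear_equilibrium_exists gam_w gam_m re_w re_m) as (x & y & Hxy); try lra.
  assert (Hsol : forall x' y', linear_equilibrium gam_w gam_m re_w re_m x' y' -> x = x' /\ y = y')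
    by (intros x' y' H'; apply (linear_equilibrium_unique gam_w gam_m re_w re_m x' y'); auto; lra).
  exists x, y; split; [apply Equiv, Hxy |]; split.
  { intros x' y' H'; apply Equiv, Hsol in H'; lra. }
  split; [| split; [| split]].
  - rewrite Rmax_Rlt, gamma_bar_w_lt1_iff, gamma_bar_m_lt1_iff by lra.
    intros [Hp Hq]; apply Hsol, linear_equilibrium_interior; lra.
  - intros Hp Hb; apply Hsol, linear_equilibrium_w0; try lra.
    apply Rnot_lt_le; rewrite <- gamma_bar_w_lt1_iff; lra.
  - intros Ha Hq; apply Hsol, linear_equilibrium_m1; try lra.
    apply Rnot_lt_le; rewrite <- gamma_bar_m_lt1_iff; lra.
  - intros Ha Hb; apply Hsol, linear_equilibrium_w0_m1; lra.
Qed.
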